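(* Let $G_1,\dots,G_k$ be rooted binary trees and let $\mathcal B(G_1,\dots,G_k)$ be the set of compatible bipartitions of $\bigcup_{i=1}^k \mathcal L(G_i)$. Then $|\mathcal B(G_1,\dots,G_k)| \le \frac{4^k}{2}-1$.
   Context: All trees are rooted and binary; $\mathcal L(T)$ denotes the leaf set of $T$. For a tree $G_i$ with root having children $r_l, r_r$, write $G_{i_l}=G_i[r_l]$ and $G_{i_r}=G_i[r_r]$ for its left and right root subtrees. A bipartition $(L_l,L_r)$ of a set is a pair of nonempty disjoint sets whose union is the set, considered up to swapping the two parts. A bipartition $(L_l,L_r)$ of $\bigcup_{i=1}^k\mathcal L(G_i)$ is compatible with $\{G_1,\dots,G_k\}$ if for each $i$ one of the following holds: (1) $\mathcal L(G_i)\subseteq L_l$; (2) $\mathcal L(G_i)\subseteq L_r$; (3) $\mathcal L(G_{i_l})\subseteq L_l$ and $\mathcal L(G_{i_r})\subseteq L_r$; (4) $\mathcal L(G_{i_l})\subseteq L_r$ and $\mathcal L(G_{i_r})\subseteq L_l$. *)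

From mathcomp Require Import all_boot.
Set Implicit Arguments. Unset Strict Implicit. Unset Printing Implicit Defensive.

Inductive btree (T : Type) : Type :=
| BLeaf of T
| BNode of btree T & btree T.

Arguments BLeaf {T} _.
Arguments BNode {T} _ _.

Fixpoint leaves {T : Type} (t : btree T) : seq T :=
  match t with
  | BLeaf x => [:: x]
  | BNode l r => leaves l ++ leaves r
  end.

Definition leafset {T : finType} (t : btree T) : {set T} := [set x in leaves t].

Definition well_labelled {T : finType} (t : btree T) : bool := uniq (leaves t).

(* Compatibility of the (ordered) pair (Ll, Lr) with a single tree G:
   conditions (1)-(4); (3),(4) only make sense when the root has children. *)
Definition compat_tree {T : finType} (Ll Lr : {set T}) (G : btree T) : bool :=
  [|| leafset G \subset Ll, leafset G \subset Lr |
    match G with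
    | BLeaf _ => false
    | BNode gl gr =>
        ((leafset gl \subset Ll) && (leafset gr \subset Lr)) ||
        ((leafset gl \subset Lr) && (leafset gr \subset Ll))
    end].

Definition all_leaves {T : finType} (k : nat) (G : 'I_k -> btree T) : {set T} :=
  \bigcup_(i < k) leafset (G i).

Definition is_bipartition {T : finType} (U Ll Lr : {set T}) : bool :=
  [&& Ll != set0, Lr != set0, [disjoint Ll & Lr] & Ll :|: Lr == U].

Definition compatible {T : finType} (k : nat) (G : 'I_k -> btree T)
  (Ll Lr : {set T}) : bool :=
  is_bipartition (all_leaves G) Ll Lr && [forall i, compat_tree Ll Lr (G i)].

(* B(G_1..G_k): compatible bipartitions, considered up to swapping the parts,
   each represented as the unordered pair {Ll, Lr}. *)
Definition compat_bipartitions {T : finType} (k : nat) (G : 'I_k -> btree T)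
  : {set {set {set T}}} :=
  [set P : {set {set T}} |
     [exists Ll : {set T}, exists Lr : {set T},
        (P == [set Ll; Lr]) && compatible G Ll Lr]].

From mathcomp Require Import all_boot.
From mathcomp Require Import zify.

Set Implicit Arguments.
Unset Strict Implicit.

(* Each compatible ordered bipartition (Ll, Lr) is determined by Ll, and Ll
   is the union, over the trees G_i, of one of four candidate sets: L(G_i),
   the empty set, L(G_il) or L(G_ir).  This gives at most 4^k codes, of
   which the two constant codes "everything left" and "everything right"
   never occur.  Every unordered bipartition comes from two ordered ones, so
   2 |B| <= 4^k - 2. *)

Section UnorderedPairs.
Variables (X : finType) (R : rel X).
Hypotheses (R_sym : forall x y, R x y -> R y x) (R_irr : irreflexive R).

Lemma card_unordered_pairs :
  2 * #|[set P : {set X} | [exists x, exists y, (P == [set x; y]) && R x y]]|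
    <= #|[set p : X * X | R p.1 p.2]|.
Proof.
set B := [set P | _]; set S := [set p | _].
rewrite -[#|S|]sum1_card.
rewrite (partition_big (fun p : X * X => [set p.1; p.2]) (mem B)) /=;
  last by move=> p; rewrite !inE => Rp; apply/existsP; exists p.1;
          apply/existsP; exists p.2; rewrite eqxx.
rewrite -[#|B|]sum1_card big_distrr /= muln1; apply: leq_sum => P.
rewrite inE => /existsP [x /existsP [y /andP [/eqP -> Rxy]]].
have x_neq_y : x != y by apply: contraTneq Rxy => ->; rewrite R_irr.
have -> : 2 = #|[set (x, y); (y, x)]|.
  by rewrite cards2 xpair_eqE (negbTE x_neq_y).
rewrite sum1_card.
apply/subset_leq_card/subsetP => p /set2P [] ->; rewrite unfold_in /= inE /=.
  by rewrite Rxy eqxx.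
by rewrite R_sym // setUC eqxx.
Qed.

End UnorderedPairs.

Lemma bipartition_compl (T : finType) (U Ll Lr : {set T}) :
  is_bipartition U Ll Lr -> Lr = U :\: Ll.
Proof.
case/and4P => _ _ disj /eqP <-; rewrite setDUl setDv set0U.
by apply/esym/setDidPl; rewrite disjoint_sym.
Qed.

Section Encoding.
Variable T : finType.

Lemma leafset_node (l r : btree T) :
  leafset (BNode l r) = leafset l :|: leafset r.
Proof. by apply/setP => x; rewrite !inE /= mem_cat. Qed.

Definition part (t : btree T) (c : bool * bool) : {set T} :=
  match c, t with
  | (false, b), _ => if b then leafset t else set0
  | (true, b), BNode l r => leafset (if b then l else r)
  | (true, _), BLeaf _ => set0
  end.

Lemma compat_tree_part (Ll Lr : {set T}) (t : btree T) :
  [disjoint Ll & Lr] -> compat_tree Ll Lr t ->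
  exists c, part t c = leafset t :&: Ll.
Proof.
move=> disj; have offL (A : {set T}) : A \subset Lr -> A :&: Ll = set0.
  by move=> sAR; apply/disjoint_setI0/(disjointWl sAR); rewrite disjoint_sym.
case/or3P => [sL | sR | ].
- by exists (false, true); apply/esym/setIidPl.
- by exists (false, false); rewrite /= offL.
case: t => // l r; rewrite leafset_node setIUl.
by case/orP => /andP [sl sr]; [exists (true, true) | exists (true, false)];
  rewrite /= ?(offL _ sl) ?(offL _ sr) ?setU0 ?set0U; apply/esym/setIidPl.
Qed.

Variables (k : nat) (G : 'I_k -> btree T).

Definition decode (f : {ffun 'I_k -> bool * bool}) : {set T} :=
  \bigcup_(i < k) part (G i) (f i).

Definition all_left : {ffun 'I_k -> bool * bool} := [ffun=> (false, true)].
Definition all_right : {ffun 'I_k -> bool * bool} := [ffun=> (false, false)].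

Lemma decode_all_left : decode all_left = all_leaves G.
Proof. by apply: eq_bigr => i _; rewrite ffunE. Qed.

Lemma decode_all_right : decode all_right = set0.
Proof. by apply: big1 => i _; rewrite ffunE. Qed.

Lemma compatible_sym (Ll Lr : {set T}) :
  compatible G Ll Lr -> compatible G Lr Ll.
Proof.
case/andP => /and4P [nLl nLr disj /eqP cover] /forallP compat.
apply/andP; split.
  by apply/and4P; rewrite disjoint_sym setUC cover.
apply/forallP => i; move: (compat i); rewrite /compat_tree.
case/or3P => [-> | -> |]; rewrite ?orbT //.
by case: (G i) => //= l r /orP [] ->; rewrite !orbT.
Qed.

Lemma compatible_irr : irreflexive (compatible G).
Proof.
move=> L; apply/negP => /andP [/and4P [nL _ disj _] _].
by move: disj; rewrite -setI_eq0 setIid (negbTE nL).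
Qed.

Lemma compatible_decode (Ll Lr : {set T}) :
  compatible G Ll Lr ->
  exists2 f, f \notin [set all_left; all_right] & decode f = Ll.
Proof.
move=> cLR; case/andP: (cLR) => bip /forallP compat.
case/and4P: (bip) => nLl nLr disj /eqP cover.
have [f part_f] := fin_all_exists (fun i => compat_tree_part disj (compat i)).
have decode_f : decode [ffun i => f i] = Ll.
  apply/setP => x; apply/bigcupP/idP => [[i _] | xL].
    by rewrite ffunE part_f => /setIP [].
  have /bigcupP [i _ xi] : x \in all_leaves G by rewrite -cover inE xL.
  by exists i; rewrite // ffunE part_f inE xi.
exists [ffun i => f i] => //; rewrite !inE.
apply/negP => /orP [] /eqP f_const; move: decode_f.
- rewrite f_const decode_all_left => Ll_all.
  by move: nLr; rewrite (bipartition_compl bip) -Ll_all setDv eqxx.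
- by rewrite f_const decode_all_right => Ll0; move: nLl; rewrite -Ll0 eqxx.
Qed.

Lemma card_compatible_pairs :
  0 < k -> #|[set p : {set T} * {set T} | compatible G p.1 p.2]| <= 4 ^ k - 2.
Proof.
move=> k_gt0; set S := [set p | _].
have fst_inj : {in S &, injective fst}.
  move=> [Ll Lr] [Ll' Lr']; rewrite !inE /= => /andP [bip _] /andP [bip' _] eqL.
  by rewrite (bipartition_compl bip) (bipartition_compl bip') eqL.
rewrite -(card_in_imset fst_inj).
apply: (@leq_trans #|decode @: ~: [set all_left; all_right]|).
  apply/subset_leq_card/subsetP => _ /imsetP [[Ll Lr] + ->].
  rewrite inE => /compatible_decode [f f_code <-].
  by apply: imset_f; rewrite inE.
apply: leq_trans (leq_imset_card _ _) _.
have left_neq_right : all_left != all_right.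
  by apply/negP => /eqP /ffunP /(_ (Ordinal k_gt0)); rewrite !ffunE.
have := cardsC [set all_left; all_right].
rewrite cards2 left_neq_right card_ffun card_prod card_bool card_ord.
by move=> <-; rewrite addKn.
Qed.

End Encoding.

Theorem lemma2 (T : finType) (k : nat) (G : 'I_k -> btree T) :
  0 < k ->
  (forall i, well_labelled (G i)) ->
  #|compat_bipartitions G| <= 4 ^ k %/ 2 - 1.
Proof.
(* The counting argument never uses that leaf labels are distinct. *)
move=> k_gt0 _.
have two_B : 2 * #|compat_bipartitions G|
               <= #|[set p : {set T} * {set T} | compatible G p.1 p.2]|.
  exact: card_unordered_pairs (@compatible_sym T k G) (compatible_irr G).
have := card_compatible_pairs G k_gt0.
lia.
Qed.
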